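(* Let $r,s,k$ be integers with $1\le k\le\min\{r,s\}$, and let $F$ be a field with $|F|\ge k+2$. Then there exist $A\in F^{r\times r}$ and $B\in F^{s\times s}$ such that the linear code $C(A,B)$ has dimension $k$ and minimum distance $d=\lfloor r/k\rfloor s$.
   Context: $C(A,B):=\{X\in F^{r\times s}\mid AX=XB\}$, viewed as a linear code of length $rs$ by regarding each matrix as the vector of its $rs$ entries. The minimum (Hamming) distance of a subspace $C$ is $\min\{\text{number of nonzero entries of }w\mid w\in C,\ w\neq0\}$. *)

From mathcomp Require Import all_boot all_order all_algebra.
Set Implicit Arguments. Unset Strict Implicit. Unset Printing Implicit Defensive.
Import GRing.Theory.
Local Open Scope ring_scope.

Definition sylv_map (F : fieldType) (r s : nat) (A : 'M[F]_r) (B : 'M[F]_s)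
  (X : 'M[F]_(r, s)) : 'M[F]_(r, s) := A *m X - X *m B.

Definition inC (F : fieldType) (r s : nat) (A : 'M[F]_r) (B : 'M[F]_s)
  (X : 'M[F]_(r, s)) : Prop := A *m X = X *m B.

(* C(A,B) viewed as a subspace of F^(r*s) (vectorizing matrices with mxvec):
   the row space of this matrix is the kernel of X |-> AX - XB. *)
Definition Cmx (F : fieldType) (r s : nat) (A : 'M[F]_r) (B : 'M[F]_s)
  : 'M[F]_(r * s) := kermx (lin_mx (@sylv_map F r s A B)).

Definition code_dim (F : fieldType) (r s : nat) (A : 'M[F]_r) (B : 'M[F]_s)
  : nat := \rank (Cmx A B).

Definition wt (F : fieldType) (r s : nat) (X : 'M[F]_(r, s)) : nat :=
  #|[set ij : 'I_r * 'I_s | X ij.1 ij.2 != 0]|.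

Definition is_min_dist (F : fieldType) (r s : nat) (A : 'M[F]_r) (B : 'M[F]_s)
  (d : nat) : Prop :=
  (exists X : 'M[F]_(r, s), [/\ inC A B X, X != 0 & wt X = d]) /\
  (forall X : 'M[F]_(r, s), inC A B X -> X != 0 -> (d <= wt X)%N).

From mathcomp Require Import all_boot all_order all_algebra zify.
Set Implicit Arguments.
Unset Strict Implicit.
Unset Printing Implicit Defensive.
Import GRing.Theory.
Local Open Scope ring_scope.

(* Split the rows into k blocks of at least q = r %/ k rows each, one block
   having exactly q rows.  Then AX = XB forces X to be constant on each block of
   rows and along each row, so C(A, B) is spanned by the k block indicator
   matrices, and a nonzero codeword fills at least one whole block, i.e. at
   least q * s entries. *)

Lemma exists_neq0_neq1 (F : fieldType) (n : nat) (f : 'I_n -> F) :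
  injective f -> (2 < n)%N -> exists2 c : F, c != 0 & c != 1.
Proof.
move=> f_inj n_gt2.
have [i /andP[fi0 fi1] | f01] := pickP (fun i => (f i != 0) && (f i != 1)).
  by exists (f i).
suff : (#|'I_n| <= #|{: bool}|)%N by rewrite card_ord card_bool leqNgt n_gt2.
apply: (@leq_card _ _ (fun i => f i == 1)) => i j eq_ij; apply: f_inj.
have f01' x : (f x == 0) || (f x == 1) by have /= := f01 x; do 2!case: eqP.
move: eq_ij (f01' i) (f01' j).
by do 2!case: eqP => [->|_]; rewrite /= ?orbF => // _ /eqP-> /eqP->.
Qed.

Lemma mxvec_sub_Cmx (F : fieldType) (r s : nat) (A : 'M[F]_r) (B : 'M[F]_s)
    (X : 'M[F]_(r, s)) :
  (mxvec X <= Cmx A B)%MS = (A *m X == X *m B).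
Proof.
rewrite sub_kermx.
have -> : lin_mx (sylv_map A B) = lin_mx (mulmx A \- mulmxr B) by [].
by rewrite mul_vec_lin /= mxvec_eq0 subr_eq0.
Qed.

Section BlockCode.

Variables (F : fieldType) (r s k : nat).
Variables (g : 'I_r -> 'I_k) (rep : 'I_k -> 'I_r) (j0 : 'I_s).
Hypothesis g_rep : cancel rep g.

Definition block (b : 'I_k) : {set 'I_r} := [set i | g i == b].

Definition block_rep_mx : 'M[F]_r := \matrix_(i, l) (l == rep (g i))%:R.

Definition pivot_mx (c : F) : 'M[F]_s :=
  c%:M + (1 - c) *: \matrix_(l, j) (l == j0)%:R.

Definition block_lift (a : 'rV[F]_k) : 'M[F]_(r, s) := \matrix_(i, j) a 0 (g i).

Definition block_basis : 'M[F]_(k, r * s) :=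
  \matrix_(b < k) mxvec (block_lift (delta_mx 0 b)).

Lemma mul_block_rep_mx (X : 'M[F]_(r, s)) i j :
  (block_rep_mx *m X) i j = X (rep (g i)) j.
Proof.
rewrite mxE (bigD1 (rep (g i))) //= mxE eqxx mul1r big1 ?addr0 // => l /negbTE.
by rewrite mxE => ->; rewrite mul0r.
Qed.

Lemma mul_pivot_mx (X : 'M[F]_(r, s)) c i j :
  (X *m pivot_mx c) i j = c * X i j + (1 - c) * X i j0.
Proof.
rewrite mulmxDr mul_mx_scalar -scalemxAr !mxE; congr (_ + _ * _).
rewrite (bigD1 j0) //= mxE eqxx mulr1 big1 ?addr0 // => l /negbTE.
by rewrite mxE => ->; rewrite mulr0.
Qed.

Lemma block_lift_inj : injective block_lift.
Proof.
move=> a a' /matrixP eq_aa'; apply/rowP => b.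
by have := eq_aa' (rep b) j0; rewrite !mxE g_rep.
Qed.

Lemma mul_block_basis a : a *m block_basis = mxvec (block_lift a).
Proof.
rewrite mulmx_sum_row.
transitivity (mxvec (\sum_b a 0 b *: block_lift (delta_mx 0 b))).
  by rewrite linear_sum; apply: eq_bigr => b _; rewrite rowK linearZ.
congr mxvec; apply/matrixP => i j.
rewrite summxE (bigD1 (g i)) //= !mxE !eqxx mulr1.
rewrite big1 ?addr0 // => b /negbTE gib.
by rewrite !mxE eq_sym gib andbF mulr0.
Qed.

Lemma rank_block_basis : \rank block_basis = k.
Proof.
apply/eqP; apply: inj_row_free => a.
rewrite mul_block_basis => /eqP; rewrite mxvec_eq0 => /eqP lift_a0.
by apply: block_lift_inj; rewrite lift_a0; apply/matrixP => i j; rewrite !mxE.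
Qed.

Lemma block_lift_inC c a : inC block_rep_mx (pivot_mx c) (block_lift a).
Proof.
apply/matrixP => i j; rewrite mul_block_rep_mx mul_pivot_mx !mxE g_rep.
by rewrite -mulrDl addrC subrK mul1r.
Qed.

Lemma inC_block_lift c (X : 'M[F]_(r, s)) : c != 0 -> c != 1 ->
  inC block_rep_mx (pivot_mx c) X -> X = block_lift (\row_b X (rep b) j0).
Proof.
move=> c0 c1 /matrixP eqX.
have {}eqX i j : X (rep (g i)) j = c * X i j + (1 - c) * X i j0.
  by rewrite -mul_block_rep_mx eqX mul_pivot_mx.
have rep_row_const i j : X (rep (g i)) j = X (rep (g i)) j0.
  have := eqX (rep (g i)) j; rewrite g_rep => e.
  have c1' : 1 - c != 0 by rewrite subr_eq0 eq_sym.
  apply: (mulfI c1'); apply: (addrI (c * X (rep (g i)) j)).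
  by rewrite -e -mulrDl addrC subrK mul1r.
have col_const i : X i j0 = X (rep (g i)) j0.
  by rewrite eqX -mulrDl addrC subrK mul1r.
apply/matrixP => i j; rewrite !mxE; apply: (mulfI c0).
apply: (addIr ((1 - c) * X i j0)).
by rewrite -eqX rep_row_const [X i j0]col_const -mulrDl addrC subrK mul1r.
Qed.

Lemma Cmx_block_basis c : c != 0 -> c != 1 ->
  (Cmx block_rep_mx (pivot_mx c) == block_basis)%MS.
Proof.
move=> c0 c1; apply/andP; split; apply/row_subP => i.
  rewrite -[row i _]vec_mxK.
  have : (mxvec (vec_mx (row i (Cmx block_rep_mx (pivot_mx c)))) <=
          Cmx block_rep_mx (pivot_mx c))%MS by rewrite vec_mxK row_sub.
  rewrite mxvec_sub_Cmx => /eqP /(inC_block_lift c0 c1) ->.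
  by rewrite -mul_block_basis submxMl.
by rewrite rowK mxvec_sub_Cmx; apply/eqP/block_lift_inC.
Qed.

Lemma code_dim_block c : c != 0 -> c != 1 ->
  code_dim block_rep_mx (pivot_mx c) = k.
Proof.
move=> c0 c1.
by rewrite /code_dim (eqmx_rank (Cmx_block_basis c0 c1)) rank_block_basis.
Qed.

Lemma wt_block_lift a :
  wt (block_lift a) = (#|[set i | (a 0 (g i) != 0)%R]| * s)%N.
Proof.
rewrite /wt -[in RHS](card_ord s) -cardsT -cardsX.
by apply: eq_card => -[i j]; rewrite !inE mxE andbT.
Qed.

Lemma wt_block_lift_ge (a : 'rV[F]_k) b :
  a 0 b != 0 -> (#|block b| * s <= wt (block_lift a))%N.
Proof.
move=> ab0; rewrite wt_block_lift leq_mul2r; apply/orP; right.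
by apply/subset_leq_card/subsetP => i; rewrite !inE => /eqP->.
Qed.

Lemma block_min_dist c b0 : c != 0 -> c != 1 ->
  (forall b, #|block b0| <= #|block b|)%N ->
  is_min_dist block_rep_mx (pivot_mx c) (#|block b0| * s)%N.
Proof.
move=> c0 c1 b0_min; split.
  exists (block_lift (delta_mx 0 b0)); split; first exact: block_lift_inC.
    apply/eqP => /matrixP /(_ (rep b0) j0) /eqP.
    by rewrite !mxE g_rep !eqxx oner_eq0.
  rewrite wt_block_lift; congr (_ * s)%N; apply: eq_card => i.
  by rewrite !inE mxE eqxx /=; case: (g i == b0); rewrite ?oner_eq0 ?eqxx.
move=> X /(inC_block_lift c0 c1) ->; move: (\row_b _) => a lift_a0.
have [b ab0] : exists b, a 0 b != 0.
  apply/existsP; apply: contraNT lift_a0 => /existsPn a0.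
  by apply/eqP/matrixP => i j; rewrite !mxE; apply/eqP/negbNE/a0.
by apply: leq_trans (wt_block_lift_ge ab0); rewrite leq_mul2r b0_min orbT.
Qed.

End BlockCode.

Section DivisionBlocks.
Local Open Scope nat_scope.

Variables (r k' : nat).
Local Notation k := k'.+1.
Local Notation q := (r %/ k).
Hypothesis k_le_r : k <= r.

Lemma quot_gt0 : 0 < q.
Proof. by rewrite divn_gt0. Qed.

Lemma block_offset_lt (b : 'I_k) (j : 'I_q) : b * q + j < r.
Proof. by have := ltn_ord b; have := ltn_ord j; nia. Qed.

Definition block_offset b j : 'I_r := Ordinal (block_offset_lt b j).

Definition div_block (i : 'I_r) : 'I_k := inord (minn (i %/ q) k').

Definition div_block_rep (b : 'I_k) : 'I_r := block_offset b (Ordinal quot_gt0).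

Lemma div_block_offset b j : div_block (block_offset b j) = b.
Proof.
apply: val_inj; rewrite /= inordK; last by rewrite ltnS geq_minr.
rewrite divnMDl ?quot_gt0 // divn_small ?addn0 //.
by apply/minn_idPl; rewrite -ltnS.
Qed.

Lemma div_block_repK : cancel div_block_rep div_block.
Proof. by move=> b; rewrite div_block_offset. Qed.

Lemma block_offset_inj b : injective (block_offset b).
Proof. by move=> j j' /(congr1 val) /addnI /val_inj. Qed.

Lemma card_div_block_ge b : q <= #|block div_block b|.
Proof.
rewrite -[q in q <= _]card_ord -(card_imset _ (@block_offset_inj b)).
apply/subset_leq_card/subsetP => _ /imsetP[j _ ->].
by rewrite inE div_block_offset.
Qed.

Lemma card_div_block0 : #|block div_block ord0| = q.
Proof.
apply/eqP; rewrite eqn_leq card_div_block_ge andbT.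
rewrite -[q in _ <= q]card_ord -(card_imset _ (@block_offset_inj ord0)).
apply/subset_leq_card/subsetP => i; rewrite inE => /eqP/(congr1 val)/=.
rewrite inordK ?ltnS ?geq_minr // => i_lt_q.
have {}i_lt_q : i < q by have := ltn_ord i; nia.
by apply/imsetP; exists (Ordinal i_lt_q) => //; apply: val_inj.
Qed.

End DivisionBlocks.

Theorem theorem4p3 (F : fieldType) (r s k : nat) :
  (1 <= k)%N -> (k <= minn r s)%N ->
  (exists f : 'I_(k + 2) -> F, injective f) ->
  exists (A : 'M[F]_r) (B : 'M[F]_s),
    code_dim A B = k /\ is_min_dist A B ((r %/ k) * s)%N.
Proof.
move=> k_gt0; rewrite leq_min => /andP[k_le_r k_le_s] [f f_inj].
have [c c0 c1] : exists2 c : F, c != 0 & c != 1.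
  by apply: exists_neq0_neq1 f_inj _; rewrite addn2 ltnS.
have j0 : 'I_s := Ordinal (leq_trans k_gt0 k_le_s).
case: k k_gt0 k_le_r {k_le_s f f_inj} => // k' _ k_le_r.
have rep_cancel := div_block_repK k_le_r.
exists (block_rep_mx F (div_block k') (div_block_rep k_le_r)), (pivot_mx j0 c).
split; first exact: (code_dim_block j0 rep_cancel c0 c1).
rewrite -(card_div_block0 k_le_r).
apply: (block_min_dist j0 rep_cancel c0 c1) => b.
by rewrite (card_div_block0 k_le_r); apply: card_div_block_ge.
Qed.
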